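(* Let $\sigma$ be the morphism on $\{c_0,c_1,c_2,c_3\}$ given by $\sigma(c_0)=c_0c_1$, $\sigma(c_1)=c_2c_3$, $\sigma(c_2)=c_0c_1c_2$, $\sigma(c_3)=c_3c_2c_3$, and let $x_\sigma=\lim_n\sigma^n(c_0)$ be its fixed point starting with $c_0$. Let $g$ be the morphism on $\{a,b\}$ given by $g(a)=baa$, $g(b)=ba$, with fixed point $x_G=\lim_n g^n(b)$, and let $\delta$ be the morphism $\delta(a)=c_2c_3$, $\delta(b)=c_0c_1$. Then $x_\sigma=\delta(x_G)$. Moreover, for all $n\ge1$, the number $p_\sigma(n)$ of distinct words of length $n$ occurring in $x_\sigma$ equals $n+3$. *)

From mathcomp Require Import all_boot.
From mathcomp Require Import boolp.
Set Implicit Arguments. Unset Strict Implicit. Unset Printing Implicit Defensive.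

(* Finite words over A are [seq A]; infinite words are [nat -> A]. *)

Definition morph {A B : Type} (f : A -> seq B) (w : seq A) : seq B :=
  flatten (map f w).

Definition is_limit_word {A : Type} (u : nat -> seq A) (x : nat -> A) : Prop :=
  forall N, exists n0, forall n, n0 <= n ->
    N < size (u n) /\ forall i (x0 : A), i <= N -> nth x0 (u n) i = x i.

(* Image of an infinite word under a non-erasing morphism f. Position j lies
   within the image of the prefix of length j+1. *)
Definition morph_inf {A B : Type} (b0 : B) (f : A -> seq B) (x : nat -> A) : nat -> B :=
  fun j => nth b0 (morph f [seq x k | k <- iota 0 j.+1]) j.

Definition factor_at {A : finType} (x : nat -> A) (n i : nat) : n.-tuple A :=
  [tuple x (i + j) | j < n].

Definition complexity {A : finType} (x : nat -> A) (n : nat) : nat :=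
  #|[set w : n.-tuple A | `[< exists i, w = factor_at x n i >]]|.

Definition c0 : 'I_4 := @Ordinal 4 0 isT.
Definition c1 : 'I_4 := @Ordinal 4 1 isT.
Definition c2 : 'I_4 := @Ordinal 4 2 isT.
Definition c3 : 'I_4 := @Ordinal 4 3 isT.
Definition la : 'I_2 := @Ordinal 2 0 isT.
Definition lb : 'I_2 := @Ordinal 2 1 isT.

Definition sigma (c : 'I_4) : seq 'I_4 :=
  match nat_of_ord c with
  | 0 => [:: c0; c1]
  | 1 => [:: c2; c3]
  | 2 => [:: c0; c1; c2]
  | _ => [:: c3; c2; c3]
  end.

Definition g (c : 'I_2) : seq 'I_2 :=
  match nat_of_ord c with
  | 0 => [:: lb; la; la]
  | _ => [:: lb; la]
  end.

Definition delta (c : 'I_2) : seq 'I_4 :=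
  match nat_of_ord c with
  | 0 => [:: c2; c3]
  | _ => [:: c0; c1]
  end.

(* Fixed points, built from the iterates (each iterate has length > i for the
   i-th letter); the theorem also asserts they are the limits. *)
Definition x_sigma : nat -> 'I_4 :=
  fun i => nth c0 (iter i.+1 (morph sigma) [:: c0]) i.
Definition x_G : nat -> 'I_2 :=
  fun i => nth lb (iter i.+1 (morph g) [:: lb]) i.

From mathcomp Require Import all_boot.
From mathcomp Require Import boolp.
From mathcomp Require Import zify.
Set Implicit Arguments. Unset Strict Implicit. Unset Printing Implicit Defensive.

(* The iterates of sigma from c0 are the images under delta of the iterates of
   g from b, because sigma (delta c) = delta (g c) for every letter c; hence
   x_sigma = delta(x_G).  Since delta is 2-uniform, the factors of length n of
   x_sigma at even positions correspond bijectively to the factors of x_G of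
   length ceil(n/2), those at odd positions to the factors of length
   floor(n/2) + 1, and the two kinds are told apart by their first letter
   ({c0, c2} against {c1, c3}).  So p_sigma(n) = p_G(ceil(n/2)) + p_G(floor(n/2) + 1),
   and it remains to see that p_G(n) = n + 1.  Over two letters p_G(n+1) - p_G(n)
   is the number of right special factors of length n.  Since bb and aaa do not
   occur in x_G, a right special factor w of length >= 2 ends with ba, and
   desubstituting through g yields a shorter right special factor z with w a
   suffix of a g(z) ba; by induction any two right special factors are
   suffix-comparable, so there is at most one of each length, and the words
   g(z) ba iterated from the empty word give one of every length. *)

Section Morphism.
Variables (A B : Type) (f : A -> seq B).

Lemma morph_cons c u : morph f (c :: u) = f c ++ morph f u.
Proof. by []. Qed.

Lemma morph_cat u v : morph f (u ++ v) = morph f u ++ morph f v.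
Proof. by rewrite /morph map_cat flatten_cat. Qed.

Lemma morph_rcons u c : morph f (rcons u c) = morph f u ++ f c.
Proof. by rewrite -cats1 morph_cat /morph /= cats0. Qed.

Lemma size_morph_ge k u : (forall c, k <= size (f c)) ->
  k * size u <= size (morph f u).
Proof.
move=> f_ge; elim: u => [|c u IH]; first by rewrite muln0.
by rewrite morph_cons size_cat mulnS leq_add.
Qed.

Lemma morph_eq_cat Y P S : morph f Y = P ++ S ->
  (P = morph f Y /\ S = [::]) \/
  exists Y1 c Y2 k, [/\ Y = Y1 ++ c :: Y2, k < size (f c),
     P = morph f Y1 ++ take k (f c) & S = drop k (f c) ++ morph f Y2].
Proof.
elim: Y P => [|c Y IH] P.
  by case: P => [|? ?] //; case: S => [|? ?] //; left.
rewrite morph_cons => eqPS.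
case: (ltnP (size P) (size (f c))) => [lt_P|le_P].
  right; exists [::], c, Y, (size P); split => //.
    by have := congr1 (take (size P)) eqPS; rewrite take_cat lt_P take_size_cat.
  by have := congr1 (drop (size P)) eqPS; rewrite drop_cat lt_P drop_size_cat.
have [P2 defP] : exists P2, P = f c ++ P2.
  exists (drop (size (f c)) P).
  have := congr1 (take (size (f c))) eqPS; rewrite take_size_cat // takel_cat //.
  by move=> {1}->; rewrite cat_take_drop.
move: eqPS; rewrite defP -catA => /(congr1 (drop (size (f c)))).
rewrite !drop_size_cat // => /IH.
case=> [[-> ->]|[Y1 [c' [Y2 [k [-> lt_k -> ->]]]]]]; first by left.
by right; exists (c :: Y1), c', Y2, k; rewrite morph_cons catA.
Qed.

End Morphism.

Lemma morph_morph (A B C : Type) (f : B -> seq C) (h : A -> seq B) u :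
  morph f (morph h u) = morph (fun c => morph f (h c)) u.
Proof. by elim: u => [|c u IH] //; rewrite !morph_cons morph_cat IH. Qed.

Lemma eq_morph (A B : Type) (f f' : A -> seq B) : f =1 f' -> morph f =1 morph f'.
Proof. by move=> eq_f u; rewrite /morph (eq_map eq_f). Qed.

Lemma infix_morph (A B : eqType) (f : A -> seq B) u v :
  infix u v -> infix (morph f u) (morph f v).
Proof. by case/infixP=> p [s ->]; rewrite !morph_cat infix_infix. Qed.

Section IteratedMorphism.
Variables (A : Type) (f : A -> seq A) (a0 : A) (t0 : seq A).
Hypotheses (f_a0 : f a0 = a0 :: t0) (t0_nonempty : 0 < size t0)
  (f_nonerasing : forall c, 0 < size (f c)).

Local Notation I n := (iter n (morph f) [:: a0]).

Lemma iter_morphS n : I n.+1 = I n ++ iter n (morph f) t0.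
Proof.
elim: n => [|n IH]; first by rewrite /= /morph /= cats0 f_a0.
by rewrite [LHS]iterS IH morph_cat -[morph f (I n)]/(I n.+1) IH.
Qed.

Lemma iter_morph_prefix m n : m <= n -> exists r, I n = I m ++ r.
Proof.
move/subnK <-; elim: (n - m) => [|k [r IH]]; first by exists [::]; rewrite cats0.
by exists (r ++ iter (k + m) (morph f) t0); rewrite addSn iter_morphS IH catA.
Qed.

Lemma size_iter_morph_tail n : 0 < size (iter n (morph f) t0).
Proof.
elim: n => [//|n IH].
by rewrite iterS (leq_trans _ (size_morph_ge _ f_nonerasing)) ?mul1n.
Qed.

Lemma size_iter_morph n : n < size (I n).
Proof.
elim: n => [//|n IH].
by rewrite iter_morphS size_cat; have := size_iter_morph_tail n; lia.
Qed.

Lemma nth_iter_morph x0 d n i : i < size (I n) ->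
  nth x0 (I n) i = nth d (I i.+1) i.
Proof.
move=> ltin; have ltii : i < size (I i.+1) by apply: ltn_trans (size_iter_morph _).
rewrite (set_nth_default x0 d ltii).
have nth_max m : m <= maxn n i.+1 -> i < size (I m) ->
    nth x0 (I m) i = nth x0 (I (maxn n i.+1)) i.
  by move=> /iter_morph_prefix [r ->] ltim; rewrite nth_cat ltim.
by rewrite nth_max ?leq_maxl // [RHS]nth_max ?leq_maxr.
Qed.

Lemma iter_morph_limit d :
  is_limit_word (fun n => I n) (fun i => nth d (I i.+1) i).
Proof.
move=> N; exists N.+1 => n leNn; have ltn := size_iter_morph n.
by split=> [|i x0 leiN]; [lia | apply: nth_iter_morph; lia].
Qed.

End IteratedMorphism.

Section Factors.
Variables (T : finType) (x : nat -> T).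

Definition factors n := [set w : n.-tuple T | `[< exists i, w = factor_at x n i >]].

Lemma factorsP n (w : n.-tuple T) :
  reflect (exists i, w = factor_at x n i) (w \in factors n).
Proof. by rewrite inE; apply: asboolP. Qed.

Lemma nth_factor_at n i j x0 : j < n -> nth x0 (factor_at x n i) j = x (i + j).
Proof. by move=> ltjn; rewrite -[j]/(nat_of_ord (Ordinal ltjn)) nth_mktuple. Qed.

Lemma factor_atS n i :
  factor_at x n.+1 i = rcons_tuple (factor_at x n i) (x (i + n)).
Proof.
apply/val_inj/(@eq_from_nth _ (x i)) => [|j]; first by rewrite size_rcons !size_tuple.
rewrite size_tuple => ltjn; rewrite nth_factor_at // nth_rcons size_tuple.
by case: ltngtP => [?|?|->]; [rewrite nth_factor_at | lia |].
Qed.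

Lemma rcons_tuple_inj n c : injective (fun w : n.-tuple T => rcons_tuple w c).
Proof. by move=> w1 w2 /(congr1 val) eq_w; apply/val_inj/(rcons_injl c). Qed.

Lemma factors_rcons n (w : n.-tuple T) c :
  rcons_tuple w c \in factors n.+1 -> w \in factors n.
Proof.
case/factorsP=> i; rewrite factor_atS => /(congr1 val) /rcons_inj [eq_w _].
by apply/factorsP; exists i; apply: val_inj.
Qed.

Lemma complexity0 : complexity x 0 = 1.
Proof.
rewrite /complexity -/(factors 0); have -> : factors 0 = setT.
  apply/setP => w; rewrite in_setT; apply/factorsP; exists 0.
  by rewrite [LHS]tuple0 [RHS]tuple0.
by rewrite cardsT card_tuple.
Qed.

End Factors.

Lemma ord2P (c : 'I_2) : c = la \/ c = lb.
Proof. by case: c => [[|[|]]] // ?; [left | right]; apply/val_inj. Qed.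

Definition right_special (x : nat -> 'I_2) n :=
  [set w : n.-tuple 'I_2 |
     (rcons_tuple w la \in factors x n.+1) && (rcons_tuple w lb \in factors x n.+1)].

(* Every factor extends to the right, in two ways exactly when it is right special. *)
Lemma complexityS (x : nat -> 'I_2) n :
  complexity x n.+1 = complexity x n + #|right_special x n|.
Proof.
pose ext c := [set w : n.-tuple 'I_2 | rcons_tuple w c \in factors x n.+1].
have extE c w : (w \in ext c) = (rcons_tuple w c \in factors x n.+1) by rewrite in_set.
pose rc c := fun w : n.-tuple 'I_2 => rcons_tuple w c.
have factors_ext : factors x n = ext la :|: ext lb.
  apply/setP => w; apply/idP/setUP; rewrite !extE; last by case=> /factors_rcons.
  case/factorsP=> i ->.
  have : factor_at x n.+1 i \in factors x n.+1 by apply/factorsP; exists i.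
  by rewrite factor_atS; case: (ord2P (x (i + n))) => ->; [left | right].
have factorsS : factors x n.+1 = rc la @: ext la :|: rc lb @: ext lb.
  apply/setP => w; apply/idP/setUP => [wF|]; last by case=> /imsetP[w' ]; rewrite extE => ? ->.
  case/factorsP: (wF) => i defw; rewrite defw factor_atS in wF *.
  by case: (ord2P (x (i + n))) wF => -> wF; [left | right]; apply: imset_f; rewrite extE.
have ext_disjoint : rc la @: ext la :&: rc lb @: ext lb = set0.
  apply/setP => w; rewrite inE in_set0; apply/negP => /andP[/imsetP[w1 _ ->] /imsetP[w2 _]].
  by move/(congr1 val) => /rcons_inj /(congr1 snd) /(congr1 val).
have -> : right_special x n = ext la :&: ext lb by apply/setP => w; rewrite in_setI !extE in_set.
rewrite /complexity -!/(factors x _) factorsS cardsU ext_disjoint cards0 subn0.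
by rewrite !card_imset; try apply: rcons_tuple_inj; rewrite factors_ext cardsUI.
Qed.

Lemma size_g c : 2 <= size (g c).
Proof. by case: (ord2P c) => ->. Qed.

Lemma g_lb : g lb = lb :: [:: la].
Proof. by []. Qed.

Lemma g_nonerasing c : 0 < size (g c).
Proof. exact: leq_trans (size_g c). Qed.

Definition g_iter n := iter n (morph g) [:: lb].

Lemma g_iterS n : g_iter n.+1 = g_iter n ++ iter n (morph g) [:: la].
Proof. exact: (iter_morphS g_lb). Qed.

Lemma size_g_iter n : n < size (g_iter n).
Proof. exact: (size_iter_morph g_lb isT g_nonerasing). Qed.

Lemma nth_g_iter n i : i < size (g_iter n) -> nth lb (g_iter n) i = x_G i.
Proof. exact: (nth_iter_morph g_lb isT g_nonerasing). Qed.

Definition g_factor u := exists n, infix u (g_iter n).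

Lemma g_factor_infix u v : infix u v -> g_factor v -> g_factor u.
Proof. by move=> uv [n vG]; exists n; apply: infix_trans vG. Qed.

Lemma g_factor_morph u : g_factor u -> g_factor (morph g u).
Proof. by case=> n uG; exists n.+1; apply: infix_morph. Qed.

Lemma g_factor_image u : g_factor u ->
  exists Y p s, g_factor Y /\ morph g Y = p ++ u ++ s.
Proof.
case=> n /infixP[p [s uG]]; exists (g_iter n), p, (s ++ iter n (morph g) [:: la]).
by split; [exists n; apply: infix_refl | rewrite -[morph g _]/(g_iter n.+1) g_iterS uG -!catA].
Qed.

Lemma g_factor_rcons u : g_factor u -> exists c, g_factor (rcons u c).
Proof.
case=> n /infixP[p [s uG]].
have : 0 < size (s ++ iter n (morph g) [:: la]).
  by rewrite size_cat addn_gt0 (@size_iter_morph_tail _ g [:: la] isT g_nonerasing) orbT.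
case E : (s ++ _) => [//|c s'] _; exists c, n.+1.
by rewrite g_iterS uG -!catA E -cat_rcons infix_infix.
Qed.

Lemma morph_g_head Y : morph g Y = [::] \/ exists S, morph g Y = [:: lb, la & S].
Proof.
by case: Y => [|c Y]; [left | right; case: (ord2P c) => ->; eexists].
Qed.

Lemma morph_g_neq_la Y S : morph g Y <> la :: S.
Proof. by case: (morph_g_head Y) => [->|[S' ->]]. Qed.

Lemma drop_g c k : k < size (g c) ->
  [\/ k = 0, drop k (g c) = [:: la] | c = la /\ drop k (g c) = [:: la; la]].
Proof. by case: (ord2P c) => ->; case: k => [|[|[|k]]] // _; constructor. Qed.

Lemma morph_g_eq_cat_lb Y P S : morph g Y = P ++ lb :: S ->
  exists Y1 Y2, [/\ Y = Y1 ++ Y2, P = morph g Y1 & lb :: S = morph g Y2].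
Proof.
case/morph_eq_cat=> [[_ //]|[Y1 [c [Y2 [k [-> ltk -> eqS]]]]]].
case: (drop_g ltk) eqS => [->|->|[_ ->]] // eqS.
by exists Y1, (c :: Y2); rewrite take0 drop0 cats0 in eqS *.
Qed.

Lemma bb_not_g_factor : ~ g_factor [:: lb; lb].
Proof.
case/g_factor_image=> Y [p [s [_ /morph_g_eq_cat_lb [Y1 [Y2 [_ _]]]]]].
by case: (morph_g_head Y2) => [->|[S ->]].
Qed.

Lemma aaa_not_g_factor : ~ g_factor [:: la; la; la].
Proof.
case/g_factor_image=> Y [p [s [_ /morph_eq_cat [[_ //]|]]]].
case=> Y1 [c [Y2 [k [_ ltk _]]]].
case: (drop_g ltk) => [->|->|[_ ->]] /=; last 2 first.
- by case=> /esym /morph_g_neq_la.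
- by case=> /esym /morph_g_neq_la.
by case: (ord2P c) => ->.
Qed.

(* The proper suffixes of the blocks g(a) = baa and g(b) = ba. *)
Definition g_tail (t : seq 'I_2) := [\/ t = [::], t = [:: la] | t = [:: la; la]].

Lemma morph_g_suffix Y p w : morph g Y = p ++ w -> exists y1 y2 t,
  [/\ Y = y1 ++ y2, w = t ++ morph g y2, g_tail t &
      t = [:: la; la] -> exists y1', y1 = rcons y1' la].
Proof.
case/morph_eq_cat=> [[_ ->]|[Y1 [c [Y2 [k [-> ltk _ ->]]]]]].
  by exists Y, [::], [::]; rewrite cats0; split=> //; constructor.
case: (drop_g ltk) => [->|->|[-> ->]].
- by exists Y1, (c :: Y2), [::]; rewrite drop0; split=> //; constructor.
- by exists (rcons Y1 c), Y2, [:: la]; rewrite cat_rcons; split=> //; constructor.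
- exists (rcons Y1 la), Y2, [:: la; la]; rewrite cat_rcons; split=> //.
  + by constructor.
  + by exists Y1.
Qed.

Lemma morph_g_inj : injective (morph g).
Proof.
elim=> [|c Y IH] [|c' Y'] //; rewrite ?morph_cons.
- by case: (ord2P c') => ->.
- by case: (ord2P c) => ->.
case: (ord2P c) => ->; case: (ord2P c') => -> //= [].
- by move=> /IH ->.
- by move=> /esym /morph_g_neq_la.
- by move=> /morph_g_neq_la.
- by move=> /IH ->.
Qed.

Lemma index_lb_morph_g z : index lb (morph g z) = 0.
Proof. by case: (morph_g_head z) => [|[S]] ->. Qed.

(* The letter b marks the beginning of each block g(c). *)
Lemma g_tail_morph_inj t t' y y' : g_tail t -> g_tail t' ->
  t ++ morph g y = t' ++ morph g y' -> t = t' /\ y = y'.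
Proof.
have tailE s z : g_tail s -> s = take (index lb (s ++ morph g z)) (s ++ morph g z).
  move=> gs; have lbNs : lb \notin s by case: gs => ->.
  by rewrite index_cat (negPf lbNs) index_lb_morph_g addn0 take_size_cat.
move=> gt gt' E; have eqt : t = t' by rewrite (tailE _ y gt) (tailE _ y' gt') E.
split=> //; apply: morph_g_inj.
by move: E; rewrite eqt => /(congr1 (drop (size t'))); rewrite !drop_size_cat.
Qed.

Definition g_special u := g_factor (rcons u la) /\ g_factor (rcons u lb).

Lemma g_special_last u : g_special u -> u != [::] -> exists u', u = rcons u' la.
Proof.
case/lastP: u => [|u e] // [_ ub] _; case: (ord2P e) ub => -> ub; first by exists u.
exfalso; apply: bb_not_g_factor; apply: g_factor_infix ub.
by apply/infixP; exists u, [::]; rewrite cats0 -!cats1 -catA.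
Qed.

Lemma g_factor_desubst w e : g_factor (w ++ [:: lb; la; e]) -> exists y t,
  [/\ w = t ++ morph g y, g_tail t, g_factor (rcons y e) &
      t = [:: la; la] -> g_factor (la :: rcons y e)].
Proof.
case/g_factor_image=> Y [p [s [YF]]].
rewrite -catA /= catA => /morph_g_eq_cat_lb [Y1 [[|c Y2] [defY wY1 //]]].
rewrite morph_cons => gY2.
have ce : c = e.
  case: (ord2P c) gY2 => ->; case: (ord2P e) => -> //= [].
  by move=> /esym /morph_g_neq_la.
have [y1 [y [t [defY1 wE gt y1E]]]] := morph_g_suffix (esym wY1).
rewrite defY defY1 ce in YF; exists y, t; split=> //.
  by apply: g_factor_infix YF; apply/infixP; exists y1, Y2; rewrite cat_rcons catA.
move=> /y1E [y1' defy1]; apply: g_factor_infix YF; apply/infixP; exists y1', Y2.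
by rewrite defy1 -!cats1 -!catA /= -!catA.
Qed.

Definition g_lift z := la :: morph g z ++ [:: lb; la].

Lemma g_special_desubst w : g_special w -> 2 <= size w ->
  exists z, [/\ g_special z, size z < size w & suffix w (g_lift z)].
Proof.
move=> [wa wb] le2w; have wN0 : w != [::] by case: (w) le2w.
have [w1 defw] := g_special_last (conj wa wb) wN0.
case/lastP: w1 defw => [|w2 e] defw; first by rewrite defw in le2w.
have eb : e = lb.
  case: (ord2P e) => // ea; exfalso; apply: aaa_not_g_factor.
  apply: g_factor_infix wa; apply/infixP; exists w2, [::].
  by rewrite cats0 defw ea -!cats1 -!catA.
have {}defw : w = w2 ++ [:: lb; la] by rewrite defw eb -!cats1 -catA.
subst w; rewrite !rcons_cat /= in wa wb.
have [y [t [w2E gt ya ya2]]] := g_factor_desubst wa.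
have [y' [t' [w2E' gt' yb yb2]]] := g_factor_desubst wb.
have [tt' yy'] := g_tail_morph_inj gt gt' (etrans (esym w2E) w2E').
subst t' y'; have := size_morph_ge y size_g.
rewrite w2E; case: gt ya2 yb2 => -> ya2 yb2 size_gy.
- by exists y; rewrite size_cat /=; split=> //; [lia | exact: suffix_cons].
- by exists y; rewrite size_cat /=; split=> //; [lia | exact: suffix_refl].
exists (la :: y); rewrite size_cat /=; split; [by split; [apply: ya2 | apply: yb2] | lia |].
by apply/suffixP; exists [:: la; lb].
Qed.

Lemma prefix_total (T : eqType) (u v w : seq T) :
  prefix u w -> prefix v w -> prefix u v || prefix v u.
Proof.
rewrite !prefixE => /eqP uw /eqP vw.
case: (leqP (size u) (size v)) => [le_uv|/ltnW le_vu]; apply/orP; [left | right].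
- by rewrite -{1}vw take_takel // uw.
- by rewrite -{1}uw take_takel // vw.
Qed.

Lemma suffix_total (T : eqType) (u v w : seq T) :
  suffix u w -> suffix v w -> suffix u v || suffix v u.
Proof. exact: prefix_total. Qed.

Lemma suffix_g_lift z1 z2 : suffix z1 z2 -> suffix (g_lift z1) (g_lift z2).
Proof.
case/suffixP=> q ->; case/lastP: q => [|q c]; first exact: suffix_refl.
have [h gc] : exists h, g c = rcons h la 
  by case: (ord2P c) => ->; [exists [:: lb; la] | exists [:: lb]].
apply/suffixP; exists (la :: morph g q ++ h).
by rewrite /g_lift morph_cat morph_rcons gc -cats1 /= -!catA.
Qed.

Lemma g_special_suffix_total_small u v : g_special u -> size u < 2 -> g_special v ->
  suffix u v || suffix v u.
Proof.
case: u => [|c [|//]] su _ sv; first by rewrite suffix0s.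
have [[[->]|? u' /(congr1 size)]] := g_special_last su isT; last by rewrite size_rcons.
case: v sv => [|d v] sv; first by rewrite orbC suffix0s.
by have [v' ->] := g_special_last sv isT; rewrite -cats1 suffix_suffix.
Qed.

(* Long right special factors are suffixes of [g_lift] of shorter ones, and [g_lift]
   preserves the suffix order. *)
Lemma g_special_suffix_total u v : g_special u -> g_special v ->
  suffix u v || suffix v u.
Proof.
move: {2}(size u + size v) (leqnn (size u + size v)) => N.
elim: N u v => [|N IH] u v leN su sv.
  by move: leN; rewrite leqn0 addn_eq0 => /andP[/nilP -> _]; rewrite suffix0s.
case: (ltnP (size u) 2) => [lt_u|le_u]; first exact: g_special_suffix_total_small.
case: (ltnP (size v) 2) => [lt_v|le_v]; first by rewrite orbC g_special_suffix_total_small.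
have [zu [szu lt_zu u_zu]] := g_special_desubst su le_u.
have [zv [szv lt_zv v_zv]] := g_special_desubst sv le_v.
have /orP[/suffix_g_lift zuv|/suffix_g_lift zvu] := IH zu zv ltac:(lia) szu szv.
- exact: suffix_total (suffix_trans u_zu zuv) v_zv.
- exact: suffix_total u_zu (suffix_trans v_zv zvu).
Qed.

Lemma g_special_uniq u v : g_special u -> g_special v -> size u = size v -> u = v.
Proof.
have suffix_eq s1 s2 : suffix s1 s2 -> size s1 = size s2 -> s1 = s2.
  move=> /suffixP[q ->] /eqP; rewrite size_cat -{1}[size s1]add0n eqn_add2r.
  by rewrite eq_sym size_eq0 => /eqP ->.
move=> su sv eq_uv.
by case/orP: (g_special_suffix_total su sv) => /suffix_eq ->.
Qed.

Lemma g_special_catl q z : g_special (q ++ z) -> g_special z.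
Proof.
case; rewrite !rcons_cat => qza qzb.
by split; [apply: g_factor_infix qza | apply: g_factor_infix qzb]; apply: suffix_infix.
Qed.

Lemma g_special_grow z : g_special z -> g_special (morph g z ++ [:: lb; la]).
Proof.
case=> za zb; split.
  by have := g_factor_morph za; rewrite morph_rcons rcons_cat.
have [c zbc] := g_factor_rcons zb.
have [h gc] : exists h, g c = lb :: h by case: (ord2P c) => ->; eexists.
apply: g_factor_infix (g_factor_morph zbc).
rewrite !morph_rcons gc rcons_cat -catA /=.
by apply/prefixW/prefixP; exists h; rewrite -catA.
Qed.

Lemma g_special_exists n : exists u, g_special u /\ size u = n.
Proof.
have [z [sz le_nz]] : exists z, g_special z /\ n <= size z.
  elim: n => [|n [z [sz le_nz]]].
    by exists [::]; split=> //; split; [exists 1 | exists 0]; rewrite ?infix_refl.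
  exists (morph g z ++ [:: lb; la]); split; first exact: g_special_grow.
  by have := size_morph_ge z size_g; rewrite size_cat /=; lia.
exists (drop (size z - n) z); split; last by rewrite size_drop; lia.
by apply: (@g_special_catl (take (size z - n) z)); rewrite cat_take_drop.
Qed.

Lemma factor_at_x_G n i : val (factor_at x_G n i) = take n (drop i (g_iter (i + n))).
Proof.
have lt_size := size_g_iter (i + n).
apply: (@eq_from_nth _ lb) => [|j]; first by rewrite size_tuple size_takel // size_drop; lia.
rewrite size_tuple => lt_jn.
by rewrite nth_factor_at // nth_take // nth_drop nth_g_iter //; lia.
Qed.

Lemma g_factorP n (w : n.-tuple 'I_2) : reflect (g_factor w) (w \in factors x_G n).
Proof.
apply: (iffP (factorsP _ _)) => [[i ->]|[m /infixP[p [s Gm]]]].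
  by exists (i + n); rewrite factor_at_x_G; apply: infix_trans (infix_take _ _) (infix_drop _ _).
exists (size p); apply/val_inj/(@eq_from_nth _ lb) => [|j]; rewrite !size_tuple // => lt_jn.
have lt_size : size p + j < size (g_iter m).
  by rewrite Gm !size_cat size_tuple ltn_add2l ltn_addr.
rewrite nth_factor_at // -(nth_g_iter lt_size) Gm nth_cat ltnNge leq_addr /= addKn.
by rewrite nth_cat size_tuple lt_jn.
Qed.

Lemma card_right_special_x_G n : #|right_special x_G n| = 1.
Proof.
have [u [[ua ub] /eqP size_u]] := g_special_exists n.
apply/eqP/cards1P; exists (Tuple size_u); apply/setP => w; rewrite in_set1 in_set.
apply/andP/eqP => [[/g_factorP wa /g_factorP wb]|->]; last by split; apply/g_factorP.
by apply/val_inj/g_special_uniq; rewrite ?size_tuple.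
Qed.

Lemma complexity_x_G n : complexity x_G n = n.+1.
Proof.
elim: n => [|n IH]; first exact: complexity0.
by rewrite complexityS IH card_right_special_x_G addn1.
Qed.

Section UniformImage2.
Variables (A B : finType) (d0 d1 : A -> B) (x : nat -> A).

Definition uniform2_image j := (if odd j then d1 else d0) (x j./2).

Variable n : nat.

Definition uniform2_block (b : bool) (v : (uphalf (b + n)).-tuple A) : n.-tuple B :=
  [tuple (if odd (b + j) then d1 else d0) (nth (x 0) v (b + j)./2) | j < n].

Lemma factor_at_uniform2_image (b : bool) i :
  factor_at uniform2_image n (b + i.*2) = uniform2_block (factor_at x (uphalf (b + n)) i).
Proof.
apply: eq_from_tnth => j; rewrite !tnth_mktuple /uniform2_image nth_factor_at; last first.
  by have := ltn_ord j; case: b; lia.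
have -> : odd (b + i.*2 + j) = odd (b + j) by rewrite addnAC oddD odd_double addbF.
by have -> : (b + i.*2 + j)./2 = i + (b + j)./2 by case: b; lia.
Qed.

Hypotheses (n_gt0 : 0 < n) (d0_inj : injective d0) (d1_inj : injective d1)
  (d0_neq_d1 : forall a a', d0 a != d1 a').

Lemma uniform2_block_inj b : injective (@uniform2_block b).
Proof.
move=> v1 v2 eq_v; apply: eq_from_tnth => -[k lt_k]; rewrite !(tnth_nth (x 0)) /=.
have lt_j : k.*2 - b < n by have := lt_k; rewrite uphalfE; lia.
have := congr1 (fun w => tnth w (Ordinal lt_j)) eq_v; rewrite !tnth_mktuple /=.
have -> : (b + (k.*2 - b))./2 = k by lia.
by case: ifP => _; [apply: d1_inj | apply: d0_inj].
Qed.

Lemma complexity_uniform2_image :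
  complexity uniform2_image n = complexity x (uphalf n) + complexity x (uphalf n.+1).
Proof.
pose even_blocks := @uniform2_block false @: factors x (uphalf n).
pose odd_blocks := @uniform2_block true @: factors x (uphalf n.+1).
have factorsE : factors uniform2_image n = even_blocks :|: odd_blocks.
  apply/setP => w; apply/idP/setUP => [/factorsP[i ->]|].
    by rewrite -(odd_double_half i); case: (odd i); rewrite factor_at_uniform2_image;
      [right | left]; apply: imset_f; apply/factorsP; exists i./2.
  by case=> /imsetP[v /factorsP[i ->] ->]; apply/factorsP;
    [exists (false + i.*2) | exists (true + i.*2)]; rewrite factor_at_uniform2_image.
have blocks_disjoint : even_blocks :&: odd_blocks = set0.
  apply/setP => w; rewrite inE in_set0; apply/negP => /andP[/imsetP[v1 _ ->] /imsetP[v2 _]].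
  move/(congr1 (fun w => tnth w (Ordinal n_gt0))); rewrite !tnth_mktuple /=.
  exact/eqP/d0_neq_d1.
rewrite /complexity -!/(factors _ _) factorsE cardsU blocks_disjoint cards0 subn0.
by rewrite !card_imset //; apply: uniform2_block_inj.
Qed.

End UniformImage2.

Lemma nth_morph_uniform2 (A B : Type) (a0 : A) (b0 : B) (d0 d1 : A -> B)
    (delta : A -> seq B) : (forall c, delta c = [:: d0 c; d1 c]) ->
  forall s j, j < 2 * size s ->
  nth b0 (morph delta s) j = (if odd j then d1 else d0) (nth a0 s j./2).
Proof.
move=> deltaE; elim=> [|c s IH] [|[|j]] //= lt_j; rewrite morph_cons deltaE //=.
by rewrite IH ?negbK //; move: lt_j; rewrite mulnS !ltnS.
Qed.

Lemma morph_inf_uniform2 (A B : finType) (b0 : B) (d0 d1 : A -> B)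
    (delta : A -> seq B) (x : nat -> A) : (forall c, delta c = [:: d0 c; d1 c]) ->
  morph_inf b0 delta x = uniform2_image d0 d1 x.
Proof.
move=> deltaE; apply: funext => j; rewrite /morph_inf (nth_morph_uniform2 (x 0) b0 deltaE).
  by rewrite (nth_map 0) ?size_iota ?nth_iota //; lia.
by rewrite size_map size_iota; lia.
Qed.

Definition delta_fst c := head c0 (delta c).
Definition delta_snd c := last c0 (delta c).

Lemma deltaE c : delta c = [:: delta_fst c; delta_snd c].
Proof. by case: (ord2P c) => ->. Qed.

Lemma delta_fst_inj : injective delta_fst.
Proof. by move=> c c'; case: (ord2P c) => ->; case: (ord2P c') => ->. Qed.

Lemma delta_snd_inj : injective delta_snd.
Proof. by move=> c c'; case: (ord2P c) => ->; case: (ord2P c') => ->. Qed.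

Lemma delta_fst_neq_snd c c' : delta_fst c != delta_snd c'.
Proof. by case: (ord2P c) => ->; case: (ord2P c') => ->. Qed.

Lemma sigma_delta c : morph sigma (delta c) = morph delta (g c).
Proof. by case: (ord2P c) => ->. Qed.

Lemma iter_sigma_c0 n : iter n.+1 (morph sigma) [:: c0] = morph delta (g_iter n).
Proof.
elim: n => [//|n IH].
by rewrite iterS IH morph_morph (eq_morph sigma_delta) -morph_morph.
Qed.

Lemma x_sigma_uniform2 : x_sigma = uniform2_image delta_fst delta_snd x_G.
Proof.
apply: funext => j; have lt_size := size_g_iter j.
rewrite /x_sigma iter_sigma_c0 (nth_morph_uniform2 lb _ deltaE); last lia.
by rewrite /uniform2_image nth_g_iter //; lia.
Qed.

Lemma sigma_c0 : sigma c0 = c0 :: [:: c1].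
Proof. by []. Qed.

Lemma sigma_nonerasing c : 0 < size (sigma c).
Proof. by case: c => [[|[|[|[|]]]] ?]. Qed.

Theorem proposition2 :
  is_limit_word (fun n => iter n (morph sigma) [:: c0]) x_sigma /\
  is_limit_word (fun n => iter n (morph g) [:: lb]) x_G /\
  x_sigma = morph_inf c0 delta x_G /\
  (forall n, 1 <= n -> complexity x_sigma n = n + 3).
Proof.
split; first exact: (iter_morph_limit sigma_c0 isT sigma_nonerasing).
split; first exact: (iter_morph_limit g_lb isT g_nonerasing).
rewrite x_sigma_uniform2 (morph_inf_uniform2 _ _ deltaE); split=> // n n_gt0.
rewrite (complexity_uniform2_image x_G n_gt0 delta_fst_inj delta_snd_inj delta_fst_neq_snd).
by rewrite !complexity_x_G !uphalfE; lia.
Qed.
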